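(* Let $k$ be a difference field of characteristic $0$, $R=k\{y_1,\ldots,y_n\}$, $S\subseteq\mathbb{N}[x]^n$, and $I=\{\mathbf{y}^{\mathbf{u}}:\mathbf{u}\in S\}$ the perfect closure of these monomials. Then there exist $\mathbf{b}_1,\ldots,\mathbf{b}_s\in\{0,1\}^n$ such that \[I=\mathfrak{p}^{\mathbf{b}_1}\cap\cdots\cap\mathfrak{p}^{\mathbf{b}_s}.\] Moreover, if such a decomposition is irredundant, then it is unique.
   Context: A difference field is a field $k$ with a ring endomorphism $\sigma$. $R=k\{y_1,\ldots,y_n\}$ is the polynomial ring over $k$ in the variables $\sigma^j(y_i)$ ($1\le i\le n$, $j\ge0$), with $\sigma$ extended naturally. For $p=\sum_i c_ix^i\in\mathbb{N}[x]$ and $a\in R$, $a^p=\prod_i(\sigma^i(a))^{c_i}$; $\mathbf{y}^{\mathbf{u}}=y_1^{u_1}\cdots y_n^{u_n}$ for $\mathbf{u}\in\mathbb{N}[x]^n$. A $\sigma$-ideal is an ideal stable under $\sigma$; it is perfect if $a^g\in I$ implies $a\in I$ for all $a\in R$ and all nonzero $g\in\mathbb{N}[x]$. For $F\subseteq R$, $\{F\}$ denotes the smallest perfect $\sigma$-ideal containing $F$. For $\mathbf{b}\in\{0,1\}^n$, $\mathfrak{p}^{\mathbf{b}}$ is the $\sigma$-ideal generated by $\{y_i: b_i\neq0\}$. *)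

From HB Require Import structures.
From mathcomp Require Import all_boot all_order all_algebra.
From mathcomp Require Import finmap.
From mathcomp Require Import monalg.
Set Implicit Arguments. Unset Strict Implicit. Unset Printing Implicit Defensive.
Import GRing.Theory.
Local Open Scope ring_scope.

Section DifferencePolynomials.
Context (k : fieldType) (sigma : {rmorphism k -> k}) (n : nat).

(* R = k{y_1,...,y_n}: the polynomial ring over k in the infinitely many
   variables sigma^j(y_i), indexed by (i, j) : 'I_n * nat. *)
Definition dpoly := {malg k[cmonom ('I_n * nat)%type]}.

Definition dvar (i : 'I_n) (j : nat) : dpoly := << ucm (i, j) >>.

Definition dsigma (p : dpoly) : dpoly :=
  \sum_(m <- msupp p)
     sigma p@_m *: \prod_(x <- finsupp m) dvar x.1 x.2.+1 ^+ m x.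

Definition dpow (a : dpoly) (p : {poly nat}) : dpoly :=
  \prod_(i < size p) (iter i dsigma a) ^+ (p`_i)%R.

Definition dmonom (u : 'I_n -> {poly nat}) : dpoly :=
  \prod_(i < n) dpow (dvar i 0) (u i).

Definition is_ideal (I : dpoly -> Prop) : Prop :=
  [/\ I 0, (forall a b, I a -> I b -> I (a + b)) &
      (forall r a, I a -> I (r * a))].

Definition is_sigma_ideal (I : dpoly -> Prop) : Prop :=
  is_ideal I /\ (forall a, I a -> I (dsigma a)).

Definition is_perfect (I : dpoly -> Prop) : Prop :=
  forall (a : dpoly) (g : {poly nat}), g != 0 -> I (dpow a g) -> I a.

Definition perfect_closure (F : dpoly -> Prop) (a : dpoly) : Prop :=
  forall J, is_sigma_ideal J -> is_perfect J -> (forall x, F x -> J x) -> J a.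

Definition sigma_ideal_gen (F : dpoly -> Prop) (a : dpoly) : Prop :=
  forall J, is_sigma_ideal J -> (forall x, F x -> J x) -> J a.

Definition pb (b : {ffun 'I_n -> bool}) : dpoly -> Prop :=
  sigma_ideal_gen (fun a => exists2 i, b i & a = dvar i 0).

Definition monomial_perfect_ideal (S : ('I_n -> {poly nat}) -> Prop) :
    dpoly -> Prop :=
  perfect_closure (fun a => exists2 u, S u & a = dmonom u).

Definition capb (B : seq {ffun 'I_n -> bool}) (a : dpoly) : Prop :=
  forall b, b \in B -> pb b a.

Definition irredundant (B : seq {ffun 'I_n -> bool}) : Prop :=
  forall j, (j < size B)%N ->
    ~ (forall a, capb (take j B ++ drop j.+1 B) a <-> capb B a).

End DifferencePolynomials.

(* sigma acts on R as the monoid-algebra morphism induced by sigma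
   on coefficients and by the index shift sigma^j y_i |-> sigma^(j+1) y_i on
   monomials. For b in {0,1}^n, p^b is the kernel of the endomorphism [kill b]
   sending to 0 the variables sigma^j y_i with b_i set; since [kill b] commutes
   with sigma and R is a domain, p^b is a perfect sigma-ideal.
   Existence: take all b such that p^b contains every y^u, u in S. Let a lie in
   all of these p^b and let m be a monomial of a. The b recording the indices
   absent from m does not kill m, so it is not one of them: some y^u, u in S,
   only involves indices i occurring in m, say through sigma^(j_i) y_i. For
   Z = prod_i sigma^(j_i) y_i a power Z^g is a multiple of sigma^K(y^u), hence Z,
   and with it m, lies in every perfect sigma-ideal containing y^u.
   Uniqueness: if an intersection of components p^b' lies in p^b then b' <= b
   for one of them (otherwise the product of one variable outside b per
   component is a counterexample), which matches the components of two
   irredundant decompositions. *)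

From HB Require Import structures.
From mathcomp Require Import all_boot all_order all_algebra.
From mathcomp Require Import finmap.
From mathcomp Require Import monalg.
From mathcomp Require mpoly.
From mathcomp Require Import zify.
From mathcomp Require Import boolp.
Set Implicit Arguments. Unset Strict Implicit. Unset Printing Implicit Defensive.
Import GRing.Theory.
Local Open Scope ring_scope.

Section IterRMorphism.
Variables (R : pzRingType) (f : {rmorphism R -> R}) (t : nat).

Lemma iter_rmorphism_is_zmod : zmod_morphism (iter t f).
Proof. by elim: t => // s IH x y; rewrite !iterS IH rmorphB. Qed.

Lemma iter_rmorphism_is_monoid : monoid_morphism (iter t f).
Proof.
split; first by elim: t => // s IH; rewrite iterS IH rmorph1.
by elim: t => // s IH x y; rewrite !iterS IH rmorphM.
Qed.

HB.instance Definition _ :=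
  GRing.isZmodMorphism.Build R R (iter t f) iter_rmorphism_is_zmod.
HB.instance Definition _ :=
  GRing.isMonoidMorphism.Build R R (iter t f) iter_rmorphism_is_monoid.
End IterRMorphism.

Section ProductFactors.
Variable R : comPzRingType.

Lemma prod_factor (I : Type) (r : seq I) (P : pred I) (F G : I -> R) :
  (forall i, P i -> exists c, F i = c * G i) ->
  exists c, \prod_(i <- r | P i) F i = c * \prod_(i <- r | P i) G i.
Proof.
move=> FG; apply: (big_ind2 (fun x y => exists c, x = c * y)) => //.
  by exists 1; rewrite mul1r.
move=> x1 x2 y1 y2 [c1 ->] [c2 ->]; exists (c1 * c2).
by rewrite mulrACA.
Qed.

Lemma prod_window_factor (w : nat -> R) (e : nat -> nat) (s L N D : nat) :
  (s + L <= N)%N -> (forall l, (l < L)%N -> (e l <= D)%N) ->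
  exists c, \prod_(t < N) w t ^+ D = c * \prod_(l < L) w (s + l)%N ^+ e l.
Proof.
move=> sLN eD; rewrite -(big_mkord xpredT (fun t => w t ^+ D)).
rewrite (@big_cat_nat _ _ _ (s + L)) // (@big_cat_nat _ _ _ s 0 (s + L)) ?leq_addr //=.
rewrite -{2}[s]add0n big_addn addKn [\prod_(0 <= i < L) _]big_mkord.
have [c ->] : exists c, \prod_(i < L) w (i + s)%N ^+ D = c * \prod_(l < L) w (s + l)%N ^+ e l.
  apply: prod_factor => l _; exists (w (s + l)%N ^+ (D - e l)).
  by rewrite addnC -exprD subnK // eD.
exists ((\prod_(0 <= t < s) w t ^+ D) * c * \prod_(s + L <= t < N) w t ^+ D).
by rewrite !mulrA (mulrAC _ (\prod_(l < L) _)).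
Qed.
End ProductFactors.

Lemma mcoeff_sum_mapU (K : choiceType) (G : zmodType) (h : K -> K)
    (F : K -> G -> G) (p : {malg G[K]}) (M : K) :
  injective h -> F M 0 = 0 ->
  (\sum_(m <- msupp p) << F m p@_m *g h m >>)@_(h M) = F M p@_M.
Proof.
move=> h_inj FM0; rewrite raddf_sum /=.
under eq_bigr do rewrite mcoeffU (inj_eq h_inj).
case: (boolP (M \in msupp p)) => Mp.
  rewrite (bigD1_seq M) ?fset_uniq // big1 => [|m /negbTE ->]; last by rewrite mulr0n.
  by rewrite eqxx mulr1n; apply: addr0.
rewrite big1_seq ?mcoeff_outdom ?FM0 // => m /andP[_ mp].
by case: eqP mp Mp => // -> ->.
Qed.

Section MalgMonomials.
Context (K : monomType) (R : ringType).

Lemma malgUM (c : R) (M1 M2 : K) : << c *g mmul M1 M2 >> = << c *g M1 >> * << M2 >>.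
Proof. by rewrite malgM_def fgmulUU mulr1. Qed.

Lemma malgU_prod (T : Type) (r : seq T) (P : pred T) (F : T -> K) :
  << \big[mmul/mone]_(t <- r | P t) F t >> = \prod_(t <- r | P t) << F t >> :> {malg R[K]}.
Proof. by apply: (big_morph (fun M => << M >>)) => [M1 M2|]; rewrite ?malgUM. Qed.
End MalgMonomials.

Section CmonomFactor.
Context (I : choiceType).

Lemma cm_prodE (T : Type) (r : seq T) (P : pred T) (F : T -> cmonom I) y :
  (\big[mmul/mone]_(t <- r | P t) F t) y = (\sum_(t <- r | P t) F t y)%N.
Proof. by apply: (big_morph (fun M : cmonom I => M y)) => [M1 M2|]; rewrite ?cmM ?cm1. Qed.

Lemma cm_factor (M : cmonom I) :
  M = \big[mmul/mone]_(x <- finsupp M) \big[mmul/mone]_(t < M x) ucm x.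
Proof.
apply/eqP/cmP => y; rewrite cm_prodE.
under eq_bigr do rewrite cm_prodE sum_nat_const card_ord cmU.
case: (boolP (y \in finsupp M)) => yM.
  rewrite (bigD1_seq y) ?fset_uniq //= eqxx muln1 big1 ?addn0 // => x /negbTE.
  by move=> ->; rewrite muln0.
rewrite big1_seq => [|x /andP[_ xM]]; first by apply/eqP; rewrite cmE_eq0.
by case: (eqVneq x y) xM => [-> /(negP yM)|_ _]; rewrite ?muln0.
Qed.

Lemma cm_divK (A M : cmonom I) : (forall y, A y <= M y)%N -> mmul (divcm M A) A = M.
Proof. by move=> AM; apply/eqP/cmP => y; rewrite cmM divcmE subnK. Qed.

Lemma cmU_le x (M : cmonom I) : x \in finsupp M -> forall y, (ucm x y <= M y)%N.
Proof. by rewrite -cmE_neq0 -lt0n => Mx y; rewrite cmU; case: eqP => // <-. Qed.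
End CmonomFactor.

(* A product only involves finitely many variables, so it can be computed in
   a polynomial ring in finitely many variables, which is a domain. *)
Module MalgDomain.
Import mpoly monalg.

Section MalgNoZeroDivisors.
Context (I : choiceType) (R : idomainType).
Local Notation A := {malg R[cmonom I]}.

Section Encoding.
Variable vs : seq I.
Local Notation N := (size vs).

Definition cm_encode (M : cmonom I) : mpoly.multinom N :=
  mpoly.Multinom [tuple M (tnth (in_tuple vs) j) | j < N].

Lemma cm_encodeE M j : mpoly.fun_of_multinom (cm_encode M) j = M (tnth (in_tuple vs) j).
Proof. by rewrite /mpoly.fun_of_multinom tnth_mktuple. Qed.

Lemma cm_encodeM M1 M2 :
  cm_encode (mmul M1 M2) = mpoly.mnm_add (cm_encode M1) (cm_encode M2).
Proof. by apply/mpoly.mnmP => j; rewrite mpoly.mnmDE !cm_encodeE cmM. Qed.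

Lemma cm_encode1 : cm_encode mone = mpoly.mnm0.
Proof. by apply/mpoly.mnmP => j; rewrite mpoly.mnm0E cm_encodeE cm1. Qed.

Lemma cm_encode_inj (M1 M2 : cmonom I) :
  {subset finsupp M1 <= vs} -> {subset finsupp M2 <= vs} ->
  cm_encode M1 = cm_encode M2 -> M1 = M2.
Proof.
move=> M1vs M2vs eqM; apply/eqP/cmP => x.
case: (boolP (x \in vs)) => xvs.
  have xN : (index x vs < N)%N by rewrite index_mem.
  have <- : tnth (in_tuple vs) (Ordinal xN) = x by rewrite (tnth_nth x) nth_index.
  by rewrite -!cm_encodeE eqM.
have /eqP -> : M1 x == 0%N by rewrite cmE_eq0; apply: contra xvs; apply: M1vs.
by have /eqP -> : M2 x == 0%N by rewrite cmE_eq0; apply: contra xvs; apply: M2vs.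
Qed.

Definition encode_mpolyX (M : cmonom I) : mpoly.mpoly N R :=
  mpoly.mpolyX R (cm_encode M).

Lemma encode_mpolyX_is_mmorphism : mmorphism encode_mpolyX.
Proof.
split=> [M1 M2|]; last by rewrite /encode_mpolyX cm_encode1 mpoly.mpolyX0.
by rewrite /encode_mpolyX cm_encodeM mpoly.mpolyXD.
Qed.
HB.instance Definition _ := isMultiplicative.Build (cmonom I) (mpoly.mpoly N R)
  encode_mpolyX encode_mpolyX_is_mmorphism.

Definition malg_encode (p : A) : mpoly.mpoly N R :=
  mmap (@mpoly.mpolyC N R) encode_mpolyX p.

Lemma malg_encode_neq0 (p : A) :
  (forall M, M \in msupp p -> {subset finsupp M <= vs}) ->
  p != 0 -> malg_encode p != 0.
Proof.
move=> pvs; rewrite -msupp_eq0 => /fset0Pn[M Mp].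
apply/eqP => /(congr1 (mpoly.mcoeff (cm_encode M))).
rewrite /malg_encode mmapE raddf_sum mpoly.mcoeff0 (bigD1_seq M) ?fset_uniq //=.
rewrite big1_seq => [|m /andP[mM mp]].
  by rewrite mpoly.mcoeffCM mpoly.mcoeffX eqxx mulr1 addr0 => /eqP; rewrite mcoeff_eq0 Mp.
rewrite mpoly.mcoeffCM mpoly.mcoeffX.
have [/(cm_encode_inj (pvs m mp) (pvs M Mp)) eq_mM|_] := eqVneq (cm_encode m) (cm_encode M).
  by rewrite eq_mM eqxx in mM.
by rewrite mulr0.
Qed.
End Encoding.

Lemma malg_mulf_neq0 (p q : A) : p != 0 -> q != 0 -> p * q != 0.
Proof.
move=> p0 q0.
pose vs := flatten [seq enum_fset (finsupp M)
                   | M : cmonom I <- enum_fset (msupp p `|` msupp q)%fset].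
have vsP (r : A) : (msupp r `<=` msupp p `|` msupp q)%fset ->
    forall M, M \in msupp r -> {subset finsupp M <= vs}.
  move=> r_pq M Mr x xM; apply/flattenP; exists (enum_fset (finsupp M)) => //.
  by apply: map_f; apply: (fsubsetP r_pq).
have pvs := vsP p (fsubsetUl _ _); have qvs := vsP q (fsubsetUr _ _).
have := mulf_neq0 (malg_encode_neq0 pvs p0) (malg_encode_neq0 qvs q0).
by rewrite -rmorphM; apply: contraNneq => ->; rewrite rmorph0.
Qed.

Lemma malg_prodf_neq0 (T : Type) (r : seq T) (P : pred T) (F : T -> A) :
  (forall t, P t -> F t != 0) -> \prod_(t <- r | P t) F t != 0.
Proof.
move=> F0; apply: (big_ind (fun x : A => x != 0)) => //; first exact: oner_neq0.
exact: malg_mulf_neq0.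
Qed.

Lemma malg_expf_neq0 (p : A) m : p != 0 -> p ^+ m != 0.
Proof. by move=> p0; rewrite -(card_ord m) -prodr_const; apply: malg_prodf_neq0. Qed.
End MalgNoZeroDivisors.
End MalgDomain.
Import MalgDomain.

Section CmonomShift.
Variable T : choiceType.
Local Notation CM := (cmonom (T * nat)%type).

Definition cmshift (M : CM) : CM :=
  [cmonom (if i.2 is j.+1 then M (i.1, j) else 0)
     | i in [fset (x.1, x.2.+1) | x in finsupp M]]%M.

Lemma cmshiftE (M : CM) x j :
  cmshift M (x, j) = if j is j'.+1 then M (x, j') else 0%N.
Proof.
rewrite /cmshift cmE /= fsfun_fun.
case: ifPn => //; case: j => // j /imfsetP nx.
by apply/esym/eqP; rewrite cmE_eq0; apply/negP => xj; apply: nx; exists (x, j).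
Qed.

Lemma cmshiftS (M : CM) x j : cmshift M (x, j.+1) = M (x, j).
Proof. by rewrite cmshiftE. Qed.

Lemma cmshift_inj : injective cmshift.
Proof.
move=> M1 M2 eqM; apply/eqP/cmP => -[x j].
by have := congr1 (fun M : CM => M (x, j.+1)) eqM; rewrite /= !cmshiftS.
Qed.

Lemma cmshiftM (M1 M2 : CM) : cmshift (mmul M1 M2) = mmul (cmshift M1) (cmshift M2).
Proof. by apply/eqP/cmP => -[x [|j]]; rewrite cmM !cmshiftE ?cmM. Qed.

Lemma cmshift1 : cmshift mone = mone.
Proof. by apply/eqP/cmP => -[x [|j]]; rewrite cmshiftE !cm1. Qed.

Lemma cmshiftU x j : cmshift (ucm (x, j)) = ucm (x, j.+1).
Proof.
by apply/eqP/cmP => -[y [|i]]; rewrite cmshiftE !cmU !xpair_eqE ?andbF.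
Qed.
End CmonomShift.

Lemma mem_take_drop_nth (T : eqType) (s : seq T) j x x0 :
  (j < size s)%N -> x != nth x0 s j -> (x \in take j s ++ drop j.+1 s) = (x \in s).
Proof.
move=> js xj; rewrite -[in RHS](cat_take_drop j s) (drop_nth x0 js).
by rewrite !mem_cat in_cons (negbTE xj).
Qed.

Section DifferenceRing.
Context (k : fieldType) (sigma : {rmorphism k -> k}) (n : nat).
Local Notation CM := (cmonom ('I_n * nat)%type).
Local Notation D := (dpoly k n).
Local Notation ds := (@dsigma k sigma n).

Definition shift_malg (M : CM) : D := << cmshift M >>.

Lemma shift_malg_is_mmorphism : mmorphism shift_malg.
Proof.
split=> [M1 M2|]; last by rewrite /shift_malg cmshift1.
by rewrite /shift_malg cmshiftM malgM_def fgmulUU mulr1.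
Qed.
HB.instance Definition _ :=
  isMultiplicative.Build CM D shift_malg shift_malg_is_mmorphism.

Lemma dsigmaE (p : D) : ds p = mmap (malgC \o sigma) shift_malg p.
Proof.
rewrite /dsigma mmapE; apply: eq_bigr => M _ /=.
rewrite mul_malgC; congr (_ *: _).
rewrite -[RHS]/(shift_malg M) [in RHS](cm_factor M).
have shift_prod := big_morph shift_malg (mmorphM shift_malg) (mmorph1 shift_malg).
rewrite shift_prod; apply: eq_bigr => -[i j] _.
rewrite shift_prod prodr_const card_ord.
by rewrite /shift_malg cmshiftU.
Qed.

Lemma dsigma_is_zmod : zmod_morphism ds.
Proof. by move=> p q; rewrite !dsigmaE rmorphB. Qed.

Lemma dsigma_is_monoid : monoid_morphism ds.
Proof. by split=> [|p q]; rewrite !dsigmaE (rmorph1, rmorphM). Qed.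

HB.instance Definition _ := GRing.isZmodMorphism.Build D D ds dsigma_is_zmod.
HB.instance Definition _ := GRing.isMonoidMorphism.Build D D ds dsigma_is_monoid.

Lemma dsigmaU (c : k) (M : CM) : ds << c *g M >> = << sigma c *g cmshift M >>.
Proof.
by rewrite dsigmaE mmapU -[LHS]/((sigma c)%:MP * << cmshift M >>) -malgUM mul1m.
Qed.

Lemma dsigma_dvar (i : 'I_n) j : ds (dvar k i j) = dvar k i j.+1.
Proof. by rewrite /dvar dsigmaU rmorph1 cmshiftU. Qed.

Lemma iter_dsigma_dvar t (i : 'I_n) j : iter t ds (dvar k i j) = dvar k i (j + t).
Proof.
elim: t => [|t IH]; first by rewrite addn0.
by rewrite iterS {}IH dsigma_dvar addnS.
Qed.

Lemma mcoeff_dsigma (p : D) (M : CM) : (ds p)@_(cmshift M) = sigma p@_M.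
Proof.
rewrite [in LHS](monalgE p) rmorph_sum /=.
under eq_bigr do rewrite dsigmaU.
by rewrite (mcoeff_sum_mapU (F := fun=> sigma)) ?rmorph0 //; apply: cmshift_inj.
Qed.

Lemma iter_dsigma_eq0 t (p : D) : (iter t ds p == 0) = (p == 0).
Proof.
elim: t => // t IH; rewrite iterS -IH; apply/eqP/eqP => [|->]; last exact: rmorph0.
set q := iter t ds p => dq0; apply/eqP; rewrite -msupp_eq0; apply/eqP/fsetP => M.
rewrite in_fset0 -mcoeff_neq0; apply/negbTE; rewrite negbK.
have := congr1 (mcoeff (cmshift M)) dq0.
by rewrite mcoeff_dsigma mcoeff0 => /eqP; rewrite fmorph_eq0.
Qed.

Lemma ideal_kernel (f : {rmorphism D -> D}) : is_ideal (fun x => f x = 0).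
Proof.
split=> [|x y x0 y0|r x x0]; first exact: rmorph0.
  by rewrite rmorphD x0 y0 addr0.
by rewrite rmorphM x0 mulr0.
Qed.

Lemma ideal_sum (J : D -> Prop) (T : eqType) (r : seq T) (F : T -> D) :
  is_ideal J -> (forall x, x \in r -> J (F x)) -> J (\sum_(x <- r) F x).
Proof. by case=> J0 JD _ JF; rewrite big_seq; apply: big_ind. Qed.

Lemma ideal_mulr (J : D -> Prop) (a r : D) : is_ideal J -> J a -> J (a * r).
Proof. by case=> _ _ JM Ja; rewrite mulrC; apply: JM. Qed.

Lemma ideal_factor (J : D -> Prop) (x y : D) :
  is_ideal J -> J y -> (exists c, x = c * y) -> J x.
Proof. by case=> _ _ JM Jy [c ->]; apply: JM. Qed.

Lemma sigma_ideal_iter (J : D -> Prop) (a : D) t :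
  is_sigma_ideal sigma J -> J a -> J (iter t ds a).
Proof. by case=> _ Js Ja; elim: t => // t IH; rewrite iterS; apply: Js. Qed.

Lemma sigma_ideal_gen_is_sigma_ideal (F : D -> Prop) :
  is_sigma_ideal sigma (sigma_ideal_gen sigma F).
Proof.
split; first split.
- by move=> J [[J0 _ _] _].
- move=> x y Jx Jy J HJ JF; have [[_ JD _] _] := HJ.
  by apply: JD; [exact: Jx HJ JF | exact: Jy HJ JF].
- by move=> r x Jx J HJ JF; have [[_ _ JM] _] := HJ; apply: JM; exact: Jx HJ JF.
- by move=> x Jx J HJ JF; have [_ Js] := HJ; apply: Js; exact: Jx HJ JF.
Qed.

Lemma pb_sigma_ideal (b : {ffun 'I_n -> bool}) : is_sigma_ideal sigma (pb sigma b).
Proof. exact: sigma_ideal_gen_is_sigma_ideal. Qed.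

Lemma pb_dvar (b : {ffun 'I_n -> bool}) (i : 'I_n) j : b i -> pb sigma b (dvar k i j).
Proof.
move=> bi J HJ Jb; rewrite -[j]add0n -iter_dsigma_dvar.
by apply: sigma_ideal_iter => //; apply: Jb; exists i.
Qed.

Section KillVariables.
Variable b : {ffun 'I_n -> bool}.

Definition avoids (M : CM) : bool := all (fun x => ~~ b x.1) (finsupp M).

Lemma avoidsM (M1 M2 : CM) : avoids (mmul M1 M2) = avoids M1 && avoids M2.
Proof.
rewrite /avoids mdomD; apply/allP/andP => [avM|[/allP av1 /allP av2] x].
  by split; apply/allP => x xM; apply: avM; rewrite in_fsetU xM ?orbT.
by rewrite in_fsetU => /orP[/av1|/av2].
Qed.

Lemma avoids1 : avoids mone.
Proof. by rewrite /avoids mdom1. Qed.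

Lemma avoidsU x : avoids (ucm x) = ~~ b x.1.
Proof. by rewrite /avoids mdomU; apply/allP/idP => [->|bx y /fset1P ->]; rewrite ?fset11. Qed.

Lemma avoids_cmshift (M : CM) : avoids (cmshift M) = avoids M.
Proof.
apply/allP/allP => avM [i j]; rewrite -cmE_neq0 => Mij.
  by apply: (avM (i, j.+1)); rewrite -cmE_neq0 cmshiftS.
by case: j Mij => [|j]; rewrite cmshiftE ?eqxx // cmE_neq0 => /avM.
Qed.

Definition kill_monom (M : CM) : D := if avoids M then << M >> else 0.

Lemma kill_monom_is_mmorphism : mmorphism kill_monom.
Proof.
split=> [M1 M2|]; last by rewrite /kill_monom avoids1.
rewrite /kill_monom avoidsM.
by case: (avoids M1); case: (avoids M2); rewrite ?mulr0 ?mul0r // malgUM.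
Qed.
HB.instance Definition _ :=
  isMultiplicative.Build CM D kill_monom kill_monom_is_mmorphism.

Definition kill (p : D) : D := mmap malgC kill_monom p.
HB.instance Definition _ := GRing.RMorphism.copy kill (mmap malgC kill_monom).

Lemma killU (c : k) (M : CM) :
  kill << c *g M >> = << (if avoids M then c else 0) *g M >>.
Proof.
rewrite /kill mmapU /kill_monom; case: (avoids M); last by rewrite mulr0 monalgU0.
by rewrite -malgUM mul1m.
Qed.

Lemma mcoeff_kill (p : D) (M : CM) : (kill p)@_M = if avoids M then p@_M else 0.
Proof.
rewrite [in LHS](monalgE p) rmorph_sum /=.
under eq_bigr do rewrite killU.
by rewrite (mcoeff_sum_mapU (h := id) (F := fun m c => if avoids m then c else 0)) ?if_same.
Qed.

Lemma kill_dsigma (p : D) : kill (ds p) = ds (kill p).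
Proof.
rewrite [p]monalgE (rmorph_sum ds) !(rmorph_sum kill) (rmorph_sum ds) /=.
apply: eq_bigr => M _; rewrite [in RHS]killU [in RHS]dsigmaU [in LHS]dsigmaU killU.
by rewrite avoids_cmshift; case: (avoids M); rewrite ?rmorph0.
Qed.

Lemma kill_iter_dsigma t (p : D) : kill (iter t ds p) = iter t ds (kill p).
Proof. by elim: t => // t IH; rewrite !iterS kill_dsigma {}IH. Qed.

Lemma kill_dpow (p : D) (g : {poly nat}) : kill (dpow sigma p g) = dpow sigma (kill p) g.
Proof.
rewrite rmorph_prod; apply: eq_bigr => i _.
by rewrite rmorphXn /= kill_iter_dsigma.
Qed.

Lemma kill_dvar (i : 'I_n) j : kill (dvar k i j) = if b i then 0 else dvar k i j.
Proof. by rewrite /dvar killU avoidsU; case: (b i); rewrite ?monalgU0. Qed.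

Lemma pb_kill_eq0 (a : D) : pb sigma b a -> kill a = 0.
Proof.
move=> pba; apply: (pba (fun x => kill x = 0)); last by move=> _ [i bi ->]; rewrite kill_dvar bi.
split=> [|x x0]; first exact: (ideal_kernel kill).
by rewrite kill_dsigma x0 rmorph0.
Qed.
End KillVariables.

Lemma kill_eq0_pb (b : {ffun 'I_n -> bool}) (a : D) : kill b a = 0 -> pb sigma b a.
Proof.
move=> ka0 J HJ Jb; have Jideal : is_ideal J by case: HJ.
rewrite [a]monalgE; apply: ideal_sum => // m ma.
have /allPn[x xm /negPn bx] : ~~ avoids b m.
  apply: contraL ma => avm; rewrite -mcoeff_eq0.
  by have := mcoeff_kill b a m; rewrite ka0 mcoeff0 avm => <-.
rewrite -(cm_divK (cmU_le xm)) malgUM; case: Jideal => _ _; apply.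
by case: x xm bx => i j _ bi; exact: (pb_dvar j bi HJ Jb).
Qed.

Lemma pbE (b : {ffun 'I_n -> bool}) (a : D) : pb sigma b a <-> kill b a = 0.
Proof. by split; [apply: pb_kill_eq0 | apply: kill_eq0_pb]. Qed.

Lemma dpow_poly0 (a : D) : dpow sigma a 0 = 1.
Proof. by rewrite /dpow size_poly0 big_ord0. Qed.

Lemma dpow_eq0 (a : D) (g : {poly nat}) : g != 0 -> (dpow sigma a g == 0) = (a == 0).
Proof.
move=> g0; apply/idP/idP => [|/eqP ->]; last first.
  have size_g : (0 < size g)%N by rewrite size_poly_gt0.
  rewrite /dpow -(prednK size_g) big_ord_recr /= rmorph0 expr0n.
  by rewrite -lead_coefE lead_coef_eq0 (negbTE g0) mulr0.
apply: contraLR => a0; apply: malg_prodf_neq0 => i _.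
by apply: malg_expf_neq0; rewrite iter_dsigma_eq0.
Qed.

Lemma pb_perfect (b : {ffun 'I_n -> bool}) : is_perfect sigma (pb sigma b).
Proof.
move=> a g g0; rewrite !pbE kill_dpow => /eqP.
by rewrite dpow_eq0 // => /eqP.
Qed.

Lemma pb_sub (b1 b2 : {ffun 'I_n -> bool}) :
  (forall i, b1 i -> b2 i) -> forall a, pb sigma b1 a -> pb sigma b2 a.
Proof.
move=> b12 a; apply; first exact: pb_sigma_ideal.
by move=> _ [i b1i ->]; apply: pb_dvar; apply: b12.
Qed.

Lemma dmonom_pb (b : {ffun 'I_n -> bool}) (u : 'I_n -> {poly nat}) i :
  b i -> u i != 0 -> pb sigma b (dmonom sigma u).
Proof.
move=> bi ui; apply/pbE; rewrite rmorph_prod (bigD1 i) //=.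
have dpow0 : dpow sigma (0 : D) (u i) = 0 by apply/eqP; rewrite dpow_eq0.
by rewrite kill_dpow kill_dvar bi dpow0 mul0r.
Qed.

Lemma iter_dsigma_dmonom t (u : 'I_n -> {poly nat}) :
  iter t ds (dmonom sigma u) =
  \prod_(i < n | u i != 0) \prod_(l < size (u i)) dvar k i (t + l) ^+ ((u i)`_l)%R.
Proof.
rewrite rmorph_prod [RHS]big_mkcond; apply: eq_bigr => i _.
have [->|_] := eqVneq (u i) 0; first by rewrite dpow_poly0 rmorph1.
rewrite rmorph_prod; apply: eq_bigr => l _.
by rewrite rmorphXn /= !iter_dsigma_dvar add0n addnC.
Qed.

Lemma dpow_prod_dvar (P : pred 'I_n) (j : 'I_n -> nat) (g : {poly nat}) :
  dpow sigma (\prod_(i < n | P i) dvar k i (j i)) g =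
  \prod_(t < size g) \prod_(i < n | P i) dvar k i (j i + t) ^+ (g`_t)%R.
Proof.
rewrite /dpow; apply: eq_bigr => t _; rewrite rmorph_prod -prodrXl; apply: eq_bigr => i _.
by rewrite /= iter_dsigma_dvar.
Qed.

Lemma perfect_sigma_ideal_dvar_prod (J : D -> Prop) (u : 'I_n -> {poly nat})
    (j : 'I_n -> nat) :
  is_sigma_ideal sigma J -> is_perfect sigma J -> J (dmonom sigma u) ->
  J (\prod_(i < n | u i != 0) dvar k i (j i)).
Proof.
move=> HJ Jp Ju; have Jideal : is_ideal J by case: HJ.
set K := (\max_(i < n) j i)%N.
set L := (\max_(i < n) size (u i))%N.
set E := (\max_(i < n) \max_(l < size (u i)) ((u i)`_l)%R)%N.
(* Z^g is a multiple of sigma^K(y^u): the factor sigma^(K+l) y_i of the latter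
   occurs in sigma^t(Z) for t = K - j_i + l < N. *)
pose N := (K + L).+1.
pose g : {poly nat} := \poly_(t < N) E.+1.
have size_g : size g = N by rewrite size_poly_eq.
have g0 : g != 0 by rewrite -size_poly_gt0 size_g.
apply: (Jp _ g g0); have := sigma_ideal_iter K HJ Ju; rewrite iter_dsigma_dmonom.
have -> : dpow sigma (\prod_(i < n | u i != 0) dvar k i (j i)) g =
    \prod_(i < n | u i != 0) \prod_(t < N) dvar k i (j i + t) ^+ E.+1.
  rewrite dpow_prod_dvar size_g exchange_big; apply: eq_bigr => i _.
  by apply: eq_bigr => t _; rewrite coef_poly ltn_ord.
move/ideal_factor; apply=> //; apply: prod_factor => i ui.
have jK : (j i <= K)%N by exact: leq_bigmax.
have -> : \prod_(l < size (u i)) dvar k i (K + l) ^+ ((u i)`_l)%R =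
    \prod_(l < size (u i)) dvar k i (j i + (K - j i + l)) ^+ ((u i)`_l)%R.
  by apply: eq_bigr => l _; rewrite addnA subnKC.
have sL : (size (u i) <= L)%N by exact: (@leq_bigmax _ (fun i => size (u i)) i).
apply: (@prod_window_factor _ (fun t => dvar k i (j i + t)) (fun l => ((u i)`_l)%R)).
  by rewrite /N; lia.
move=> l sl.
apply: leq_trans (leqnSn _).
apply: leq_trans (@leq_bigmax _ (fun i => \max_(l < size (u i)) ((u i)`_l)%R)%N i).
exact: (@leq_bigmax _ (fun l : 'I_(size (u i)) => ((u i)`_l)%R) (Ordinal sl)).
Qed.

Lemma perfect_sigma_ideal_monomial (J : D -> Prop) (u : 'I_n -> {poly nat})
    (c : k) (m : CM) :
  is_sigma_ideal sigma J -> is_perfect sigma J -> J (dmonom sigma u) ->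
  (forall i, u i != 0 -> exists j, (i, j) \in finsupp m) -> J << c *g m >>.
Proof.
move=> HJ Jp Ju m_u; have Jideal : is_ideal J by case: HJ.
have /fin_all_exists[j jP] : forall i, exists j, u i != 0 -> (i, j) \in finsupp m.
  move=> i; have [/m_u[j ij]|_] := boolP (u i != 0); first by exists j.
  by exists 0%N.
pose Z := \big[mmul/mone]_(i < n | u i != 0) ucm (i, j i).
have Zm y : (Z y <= m y)%N.
  case: y => i0 j0; rewrite cm_prodE.
  have [ui0|ui0] := boolP (u i0 != 0); last first.
    rewrite big1 // => i ui; rewrite cmU xpair_eqE.
    by case: (eqVneq i i0) ui => [-> ui|//]; rewrite ui in ui0.
  rewrite (bigD1 i0) //= big1 => [|i /andP[_ ii0]]; last by rewrite cmU xpair_eqE (negbTE ii0).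
  by rewrite addn0 (cmU_le (jP _ ui0)).
rewrite -(cm_divK Zm) malgUM.
apply: (ideal_factor Jideal (perfect_sigma_ideal_dvar_prod j HJ Jp Ju)).
by exists << c *g divcm m Z >>; rewrite malgU_prod.
Qed.

Definition monomial_components (S : ('I_n -> {poly nat}) -> Prop)
    : seq {ffun 'I_n -> bool} :=
  [seq b <- enum {ffun 'I_n -> bool} | `[< forall u, S u -> pb sigma b (dmonom sigma u) >]].

Lemma monomial_perfect_idealE (S : ('I_n -> {poly nat}) -> Prop) (a : D) :
  monomial_perfect_ideal sigma S a <-> capb sigma (monomial_components S) a.
Proof.
split=> [Ia b | Ba J HJ Jp JS].
  rewrite mem_filter => /andP[/asboolP Sb _]; apply: Ia => [||_ [u Su ->]].
  - exact: pb_sigma_ideal.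
  - exact: pb_perfect.
  - exact: Sb.
rewrite [a]monalgE; apply: ideal_sum => [|m ma]; first by case: HJ.
pose b := [ffun i => ~~ has (fun x : 'I_n * nat => x.1 == i) (finsupp m)].
have : b \notin monomial_components S.
  apply: contraL ma => /Ba /pbE /(congr1 (mcoeff m)); rewrite mcoeff_kill mcoeff0.
  have -> : avoids b m by apply/allP => x xm; rewrite ffunE negbK; apply/hasP; exists x.
  by move/eqP; rewrite mcoeff_eq0.
rewrite mem_filter mem_enum andbT => /asboolPn/existsNP[u /not_implyP[Su not_pb_u]].
have Ju : J (dmonom sigma u) by apply: JS; exists u.
apply: (perfect_sigma_ideal_monomial _ HJ Jp Ju).
move=> i ui; have /hasP[[i' j] xm /= /eqP ii'] : has (fun x => x.1 == i) (finsupp m).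
  by apply/negPn/negP => no_i; apply: not_pb_u; apply: (dmonom_pb (i := i)); rewrite ?ffunE.
by exists j; rewrite -ii'.
Qed.

Lemma dvar_neq0 (i : 'I_n) j : dvar k i j != 0.
Proof. by rewrite monalgU_eq0 oner_eq0. Qed.

Lemma capb_sub_pb (B : seq {ffun 'I_n -> bool}) (b : {ffun 'I_n -> bool}) :
  (forall a, capb sigma B a -> pb sigma b a) ->
  exists2 b', b' \in B & forall i, b' i -> b i.
Proof.
move=> Bb.
pose below (b' : {ffun 'I_n -> bool}) := [forall i, b' i ==> b i].
have [/hasP[b' b'B /forallP b'b]|/hasPn Bnb] := boolP (has below B).
  by exists b' => // i; apply/implyP.
pose y b' := if [pick i | b' i && ~~ b i] is Some i then dvar k i 0 else 1.
have yP b' : b' \in B -> exists2 i, b' i && ~~ b i & y b' = dvar k i 0.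
  move=> /Bnb; rewrite negb_forall => /existsP[i]; rewrite negb_imply => b'i.
  by rewrite /y; case: pickP => [i' b'i'|/(_ i)]; [exists i' | rewrite b'i].
have By : capb sigma B (\prod_(b' <- B) y b').
  move=> b' b'B; rewrite (big_rem b') //=; have [i /andP[b'i _] ->] := yP b' b'B.
  apply: (ideal_mulr (J := pb sigma b')); last exact: pb_dvar.
  by case: (pb_sigma_ideal b').
have kill_y : kill b (\prod_(b' <- B) y b') != 0.
  rewrite rmorph_prod big_seq; apply: malg_prodf_neq0 => b' b'B.
  by have [i /andP[_ bi] ->] := yP b' b'B; rewrite /= kill_dvar (negbTE bi) dvar_neq0.
by have /pbE/eqP := Bb _ By; rewrite (negbTE kill_y).
Qed.

Lemma irredundant_component (B1 B2 : seq {ffun 'I_n -> bool}) :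
  (forall a, capb sigma B1 a <-> capb sigma B2 a) -> irredundant sigma B1 ->
  forall b1, b1 \in B1 ->
  exists2 b2, b2 \in B2 & forall a, pb sigma b1 a <-> pb sigma b2 a.
Proof.
move=> B12 irr b1 b1B.
have [b2 b2B b21] : exists2 b2, b2 \in B2 & forall i, b2 i -> b1 i.
  by apply: capb_sub_pb => a /B12; apply.
have [b1' b1'B b12] : exists2 b1', b1' \in B1 & forall i, b1' i -> b2 i.
  by apply: capb_sub_pb => a /B12; apply.
have [eq_b1|ne_b1] := eqVneq b1' b1.
  by exists b2 => // a; split; apply: pb_sub => i; [rewrite -eq_b1 => /b12 | move/b21].
(* Otherwise p^b1' lies in p^b1 for another component b1', so b1 is redundant. *)
have jB : (index b1 B1 < size B1)%N by rewrite index_mem.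
case: (irr _ jB) => a; split=> [Ba b bB | Ba b]; last first.
  by rewrite mem_cat => /orP[/mem_take|/mem_drop]; apply: Ba.
have [->|ne_b] := eqVneq b b1; last first.
  by apply: Ba; rewrite (mem_take_drop_nth (x0 := b1) jB) ?nth_index.
apply: (pb_sub (b1 := b1')) => [i /b12/b21 //|]; apply: Ba.
by rewrite (mem_take_drop_nth (x0 := b1) jB) ?nth_index.
Qed.
End DifferenceRing.

Theorem theorem6p3 (k : fieldType) (sigma : {rmorphism k -> k}) (n : nat)
    (S : ('I_n -> {poly nat}) -> Prop) :
  [pchar k] =i pred0 ->
  (exists B : seq {ffun 'I_n -> bool},
      forall a, monomial_perfect_ideal sigma S a <-> capb sigma B a) /\
  (forall B1 B2 : seq {ffun 'I_n -> bool},
      (forall a, monomial_perfect_ideal sigma S a <-> capb sigma B1 a) ->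
      (forall a, monomial_perfect_ideal sigma S a <-> capb sigma B2 a) ->
      irredundant sigma B1 -> irredundant sigma B2 ->
      (forall b1, b1 \in B1 ->
         exists2 b2, b2 \in B2 & forall a, pb sigma b1 a <-> pb sigma b2 a) /\
      (forall b2, b2 \in B2 ->
         exists2 b1, b1 \in B1 & forall a, pb sigma b2 a <-> pb sigma b1 a)).
Proof.
move=> _; split=> [|B1 B2 IB1 IB2 irr1 irr2].
  by exists (monomial_components sigma S) => a; apply: monomial_perfect_idealE.
have B12 a : capb sigma B1 a <-> capb sigma B2 a.
  by rewrite -IB1 -IB2.
by split; apply: irredundant_component => // a; rewrite B12.
Qed.
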